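(* Let $X$ be a Markov chain on a finite state space $\Omega$, let $y\in\Omega$, and let $T$ be a positive integer. Let $x\in\Omega$ be a state minimizing $\mathbb{P}_x(\tau_y\le T)$ over all starting states, where $\tau_y$ is the hitting time of $y$. Then $\mathbb{P}_x(\tau_y\le T)\le\frac{T}{\mathbb{E}_x\tau_y}$.
   Context: $\tau_y=\min\{t\ge0:X_t=y\}$; $\mathbb{P}_x,\mathbb{E}_x$ refer to the chain started at $x$. *)

From mathcomp Require Import all_boot all_order all_algebra.
From mathcomp Require Import all_classical all_reals.
From mathcomp Require Import ereal sequences.
Set Implicit Arguments. Unset Strict Implicit. Unset Printing Implicit Defensive.
Import Order.TTheory GRing.Theory Num.Theory.
Local Open Scope ring_scope.

(* A Markov chain on the finite state space S is given by its transition
   matrix P : S -> S -> R (nonnegative entries, rows summing to 1). *)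
Definition stochastic (R : realType) (S : finType) (P : S -> S -> R) : Prop :=
  (forall a b, 0 <= P a b) /\ (forall a, \sum_(b : S) P a b = 1).

Definition path_weight (R : realType) (S : finType) (P : S -> S -> R) (n : nat)
  (f : {ffun 'I_n.+1 -> S}) : R :=
  \prod_(k < n) P (f (inord k)) (f (inord k.+1)).

(* P_x(tau_y = n), tau_y = min{t >= 0 : X_t = y}: sum of the probabilities of
   all trajectories x = X_0, ..., X_n = y with X_k <> y for k < n. *)
Definition hit_exact (R : realType) (S : finType) (P : S -> S -> R) (y : S)
  (n : nat) (x : S) : R :=
  \sum_(f : {ffun 'I_n.+1 -> S} |
          [&& f ord0 == x, f ord_max == y &
              [forall k : 'I_n.+1, (val k < n)%N ==> (f k != y)]])
    path_weight P f.

Definition hit_le (R : realType) (S : finType) (P : S -> S -> R) (y : S)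
  (T : nat) (x : S) : R :=
  \sum_(0 <= n < T.+1) hit_exact P y n x.

(* E_x tau_y in [0, +oo]: the expectation of the [0,+oo]-valued variable
   tau_y; it is +oo when P_x(tau_y < oo) < 1. *)
Definition exp_hit (R : realType) (S : finType) (P : S -> S -> R) (y : S)
  (x : S) : \bar R :=
  if (\sum_(n <oo) (hit_exact P y n x)%:E == 1%E)%E
  then (\sum_(n <oo) (n%:R * hit_exact P y n x)%:E)%E
  else (+oo)%E.

From mathcomp Require Import all_boot all_order all_algebra.
From mathcomp Require Import all_classical all_reals.
From mathcomp Require Import ereal sequences.
From mathcomp Require Import all_analysis.
From mathcomp Require Import ring.
Import Order.TTheory GRing.Theory Num.Theory.
Set Implicit Arguments. Unset Strict Implicit. Unset Printing Implicit Defensive.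
Local Open Scope ring_scope.

(* Write s_N(z) = P_z(tau_y > N). The first-step decomposition gives
   s_(N+1) = Q s_N for the transition operator Q killed at y, so the Markov
   property at time T gives s_(m+T)(z) <= c s_m(z) with c = max_z s_T(z), which
   is s_T(x) by the choice of x. Hence s_n(x) <= c^k for n >= kT, and
   E_x tau_y = sum_n s_n(x) <= T sum_k c^k = T / (1 - c) = T / P_x(tau_y <= T).
   The same geometric bound shows that tau_y is a.s. finite when c < 1. *)

Section FfunCons.
Variable S : finType.

Definition fcons n (a : S) (g : {ffun 'I_n.+1 -> S}) : {ffun 'I_n.+2 -> S} :=
  [ffun i => if unlift ord0 i is Some j then g j else a].

Definition fbehead n (f : {ffun 'I_n.+2 -> S}) : {ffun 'I_n.+1 -> S} :=
  [ffun j => f (lift ord0 j)].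

Lemma fcons0 n a (g : {ffun 'I_n.+1 -> S}) : fcons a g ord0 = a.
Proof. by rewrite ffunE unlift_none. Qed.

Lemma fcons_lift n a (g : {ffun 'I_n.+1 -> S}) j : fcons a g (lift ord0 j) = g j.
Proof. by rewrite ffunE liftK. Qed.

Lemma fconsK n (a : S) : cancel (@fcons n a) (@fbehead n).
Proof. by move=> g; apply/ffunP => j; rewrite ffunE fcons_lift. Qed.

Lemma fcons_behead n (f : {ffun 'I_n.+2 -> S}) : fcons (f ord0) (fbehead f) = f.
Proof. by apply/ffunP => i; rewrite ffunE; case: unliftP => [j ->|->]; rewrite ?ffunE. Qed.

Lemma sum_ffun_cons (R : nmodType) n (F : {ffun 'I_n.+2 -> S} -> R) :
  \sum_(f : {ffun 'I_n.+2 -> S}) F f =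
  \sum_(a : S) \sum_(g : {ffun 'I_n.+1 -> S}) F (fcons a g).
Proof.
rewrite pair_bigA /= (reindex (fun p : S * {ffun 'I_n.+1 -> S} => fcons p.1 p.2)) //=.
exists (fun f : {ffun 'I_n.+2 -> S} => (f ord0, fbehead f)) => [[a g] _|f _] /=.
  by rewrite fcons0 fconsK.
by rewrite fcons_behead.
Qed.

Lemma fcons_avoid n (y a : S) (g : {ffun 'I_n.+1 -> S}) :
  [forall k : 'I_n.+2, (val k < n.+1)%N ==> (fcons a g k != y)] =
  (a != y) && [forall k : 'I_n.+1, (val k < n)%N ==> (g k != y)].
Proof.
apply/forallP/andP => [H|[ay /forallP H] k].
  split; first by move: (H ord0); rewrite fcons0.
  by apply/forallP => j; move: (H (lift ord0 j)); rewrite fcons_lift /= /bump /= ltnS.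
case: (unliftP ord0 k) => [j ->|->]; last by rewrite fcons0.
by rewrite fcons_lift /= /bump /= ltnS; exact: H.
Qed.

End FfunCons.

Lemma inord0 n : (inord 0 : 'I_n.+1) = ord0.
Proof. by apply/val_inj; rewrite /= inordK. Qed.

Lemma inordS n k : (k <= n)%N -> (inord k.+1 : 'I_n.+2) = lift ord0 (inord k : 'I_n.+1).
Proof. by move=> kn; apply/val_inj; rewrite /= /bump /= !inordK. Qed.

Lemma ord_maxS n : (ord_max : 'I_n.+2) = lift ord0 (ord_max : 'I_n.+1).
Proof. by apply/val_inj; rewrite /= /bump. Qed.

Lemma geometric_sum (R : comPzRingType) (c : R) K :
  (1 - c) * \sum_(0 <= k < K) c ^+ k = 1 - c ^+ K.
Proof.
elim: K => [|K IH]; first by rewrite big_geq // mulr0 expr0 subrr.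
by rewrite big_nat_recr //= mulrDr IH exprS; ring.
Qed.

Section Hitting.
Variables (R : realType) (S : finType) (P : S -> S -> R) (y : S).

Definition killed_step (f : S -> R) (z : S) : R :=
  (z != y)%:R * \sum_b P z b * f b.

Definition survival (N : nat) (z : S) : R := 1 - hit_le P y N z.

Lemma path_weight_cons n a (g : {ffun 'I_n.+1 -> S}) :
  path_weight P (fcons a g) = P a (g ord0) * path_weight P g.
Proof.
rewrite /path_weight big_ord_recl inord0 fcons0 (inordS (leq0n _)) fcons_lift inord0.
congr (_ * _); apply: eq_bigr => k _.
rewrite lift0 inordS; last by rewrite ltnW.
by rewrite inordS ?fcons_lift // ltnW // ltnS.
Qed.

Lemma hit_exact0 z : hit_exact P y 0 z = (z == y)%:R.
Proof.
have maxE : (ord_max : 'I_1) = ord0 by apply/val_inj.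
rewrite /hit_exact maxE; have [<-|zy] := eqVneq z y.
  rewrite (big_pred1 [ffun=> z]); first by rewrite /path_weight big_ord0.
  move=> f /=; rewrite andbA andbb.
  have -> : [forall k : 'I_1, (val k < 0)%N ==> (f k != z)] by apply/forallP.
  rewrite andbT; apply/eqP/eqP => [fz|->]; last by rewrite ffunE.
  by apply/ffunP => i; rewrite ffunE (ord1 i).
by rewrite big1 // => f /and3P[/eqP f0 /eqP fy _]; rewrite -f0 fy eqxx in zy.
Qed.

Lemma hit_exactS n z :
  hit_exact P y n.+1 z = killed_step (hit_exact P y n) z.
Proof.
rewrite /hit_exact big_mkcond sum_ffun_cons /=.
under eq_bigr => a _ do under eq_bigr => g _ do
  rewrite fcons0 ord_maxS fcons_lift fcons_avoid path_weight_cons.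
rewrite (bigD1 z) //= [X in _ + X]big1 ?addr0; last first.
  by move=> a az; apply: big1 => g _; rewrite (negbTE az).
rewrite /killed_step mulr_sumr -big_mkcond eqxx /=.
have [zy|zy] := eqVneq z y.
  by rewrite big_pred0 ?big1 // => [b _|g]; rewrite ?mul0r ?andbF.
rewrite (partition_big (fun g : {ffun 'I_n.+1 -> S} => g ord0) xpredT) //=.
apply: eq_bigr => b _; rewrite mul1r mulr_sumr.
by apply: eq_big => [g|g /andP[_ /eqP ->]]; rewrite // andbC.
Qed.

Lemma hit_le_survival N z : hit_le P y N z = 1 - survival N z.
Proof. by rewrite /survival opprB addrC subrK. Qed.

Lemma mean_partial_sum N z :
  \sum_(0 <= n < N.+1) n%:R * hit_exact P y n z =
  \sum_(0 <= j < N) survival j z - N%:R * survival N z.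
Proof.
elim: N => [|N IH]; first by rewrite big_nat1 big_geq // !mul0r subr0.
have hitE : hit_exact P y N.+1 z = survival N z - survival N.+1 z.
  by rewrite /survival [hit_le _ _ N.+1 _]/hit_le big_nat_recr //= -/(hit_le P y N z); ring.
by rewrite big_nat_recr //= IH hitE big_nat_recr //= -natr1; ring.
Qed.

Hypothesis Pst : stochastic P.

Lemma hit_exact_ge0 n z : 0 <= hit_exact P y n z.
Proof. by case: Pst => P0 _; apply: sumr_ge0 => f _; apply: prodr_ge0. Qed.

Lemma killed_step_le (f g : S -> R) z :
  (forall b, f b <= g b) -> killed_step f z <= killed_step g z.
Proof.
case: Pst => P0 _ fg; apply: ler_wpM2l => //; apply: ler_sum => b _.
exact: ler_wpM2l.
Qed.

Lemma killed_stepZ c (f : S -> R) z :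
  killed_step (fun b => c * f b) z = c * killed_step f z.
Proof.
rewrite /killed_step [RHS]mulrCA [c * _]mulr_sumr.
by congr (_ * _); apply: eq_bigr => b _; exact: mulrCA.
Qed.

Lemma killed_step1 z : killed_step (fun=> 1) z = (z != y)%:R.
Proof.
case: Pst => _ P1; rewrite /killed_step (eq_bigr (P z)) ?P1 ?mulr1 // => b _.
exact: mulr1.
Qed.

Lemma survival0 z : survival 0 z = (z != y)%:R.
Proof.
by rewrite /survival /hit_le big_nat1 hit_exact0; case: eqVneq; rewrite ?subrr ?subr0.
Qed.

Lemma hit_leS N z :
  hit_le P y N.+1 z = (z == y)%:R + killed_step (hit_le P y N) z.
Proof.
rewrite /hit_le big_nat_recl // hit_exact0; congr (_ + _).
under eq_bigr do rewrite hit_exactS.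
rewrite /killed_step -mulr_sumr exchange_big /=.
by congr (_ * _); apply: eq_bigr => b _; rewrite mulr_sumr.
Qed.

Lemma survivalS N z : survival N.+1 z = killed_step (survival N) z.
Proof.
have -> : killed_step (survival N) z =
          killed_step (fun=> 1) z - killed_step (hit_le P y N) z.
  rewrite /killed_step -mulrBr -sumrB.
  by congr (_ * _); apply: eq_bigr => b _; rewrite mulrBr mulr1.
by rewrite /survival hit_leS killed_step1; case: eqVneq => _ /=; ring.
Qed.

Lemma survival_ge0 N z : 0 <= survival N z.
Proof.
elim: N z => [|N IH] z; first by rewrite survival0 ler0n.
rewrite survivalS; case: Pst => P0 _; apply: mulr_ge0 => //.
by apply: sumr_ge0 => b _; apply: mulr_ge0.
Qed.

Lemma survival_le1 N z : survival N z <= 1.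
Proof.
elim: N z => [|N IH] z; first by rewrite survival0 lern1 leq_b1.
by rewrite survivalS (le_trans (killed_step_le _ IH)) // killed_step1 lern1 leq_b1.
Qed.

Lemma survival_target N : survival N y = 0.
Proof. by case: N => [|N]; rewrite ?survival0 ?survivalS /killed_step eqxx ?mul0r. Qed.

Lemma survival_succ_le N z : survival N.+1 z <= survival N z.
Proof.
elim: N z => [|N IH] z; last by rewrite survivalS [leRHS]survivalS; exact: killed_step_le.
by rewrite survivalS survival0 (le_trans (killed_step_le _ (survival_le1 0))) ?killed_step1.
Qed.

Lemma survival_nonincr m n z : (m <= n)%N -> survival n z <= survival m z.
Proof.
move=> /subnK <-; elim: (n - m)%N => [|d IH] //.
by rewrite addSn (le_trans (survival_succ_le _ _)).
Qed.

Section GeometricDecay.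
Variables (T : nat) (c : R).
Hypothesis survivalT_le : forall z, survival T z <= c.

Lemma survival_addT_le m z : survival (m + T) z <= c * survival m z.
Proof.
elim: m z => [|m IH] z.
  rewrite add0n survival0; case: eqVneq => [->|_] /=; last by rewrite mulr1.
  by rewrite survival_target mulr0.
by rewrite addSn !survivalS -killed_stepZ; exact: killed_step_le.
Qed.

Hypothesis c_ge0 : 0 <= c.

Lemma survival_mulT_le k z : survival (k * T) z <= c ^+ k.
Proof.
elim: k z => [|k IH] z; first by rewrite mul0n expr0 survival_le1.
rewrite mulSnr exprS (le_trans (survival_addT_le _ _)) //.
by rewrite ler_wpM2l.
Qed.

Lemma sum_survival_le K z :
  \sum_(0 <= n < K * T) survival n z <= T%:R * \sum_(0 <= k < K) c ^+ k.
Proof.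
elim: K => [|K IH]; first by rewrite mul0n !big_geq // mulr0.
rewrite mulSnr (big_cat_nat _ (n := K * T)) //=; last exact: leq_addr.
rewrite big_nat_recr //= mulrDr lerD //.
apply: le_trans (ler_sum_nat (G := fun=> c ^+ K) _) _.
  move=> n /andP[Kn _]; exact: le_trans (survival_nonincr _ Kn) (survival_mulT_le K z).
by rewrite sumr_const_nat addKn mulr_natl.
Qed.

Hypothesis c_le1 : c <= 1.

Lemma sum_survival_bound N z : (0 < T)%N ->
  (1 - c) * \sum_(0 <= n < N) survival n z <= T%:R.
Proof.
move=> T_gt0; have c1 : 0 <= 1 - c by rewrite subr_ge0.
apply: (@le_trans _ _ ((1 - c) * \sum_(0 <= n < N * T) survival n z)).
  rewrite ler_wpM2l // [leRHS](big_cat_nat _ (n := N)) //= ?leq_pmulr // lerDl.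
  by apply: sumr_ge0 => n _; exact: survival_ge0.
rewrite (le_trans (ler_wpM2l c1 (sum_survival_le N z))) //.
rewrite mulrCA geometric_sum ler_piMr // ?ler0n // lerBlDr lerDl.
exact: exprn_ge0.
Qed.

Lemma sum_mean_bound N z : (0 < T)%N ->
  (1 - c) * \sum_(0 <= n < N) n%:R * hit_exact P y n z <= T%:R.
Proof.
move=> T_gt0; case: N => [|N]; first by rewrite big_geq // mulr0 ler0n.
rewrite mean_partial_sum; apply: le_trans (sum_survival_bound N z T_gt0).
by rewrite ler_wpM2l ?subr_ge0 // lerBlDr lerDl mulr_ge0 ?ler0n ?survival_ge0.
Qed.

End GeometricDecay.

Lemma hit_exact_series_eq1 T c : (forall b, survival T b <= c) -> 0 <= c < 1 ->
  forall z, (\sum_(n <oo) (hit_exact P y n z)%:E = 1%:E)%E.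
Proof.
move=> svT /andP[c0 c1] z.
apply/le_anti/andP; split.
  apply: lime_le; first by apply: is_cvg_nneseries => n _ _; rewrite lee_fin hit_exact_ge0.
  apply: nearW => N; rewrite sumEFin lee_fin.
  apply: le_trans (_ : hit_le P y N z <= 1).
    by rewrite /hit_le big_nat_recr //= lerDl hit_exact_ge0.
  by rewrite hit_le_survival gerBl survival_ge0.
apply/lee_subgt0Pr => e e0.
have c_norm_lt1 : `|c| < 1 by rewrite ger0_norm.
have [K _ /(_ K (leqnn K)) cK] := cvgr0_norm_lt _ (cvg_expr c_norm_lt1) e e0.
apply: le_trans (nneseries_lim_ge (K * T).+1 _) => [|n _ _]; last first.
  by rewrite lee_fin hit_exact_ge0.
rewrite sumEFin -EFinB lee_fin -/(hit_le P y (K * T) z) hit_le_survival lerD2l lerN2.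
rewrite ger0_norm ?exprn_ge0 // in cK.
by apply: le_trans (ltW cK); exact: survival_mulT_le.
Qed.

End Hitting.

Theorem lemma6p6 (R : realType) (S : finType) (P : S -> S -> R) (y : S)
  (T : nat) (x : S) :
  stochastic P -> (0 < T)%N ->
  (forall z : S, hit_le P y T x <= hit_le P y T z) ->
  ((hit_le P y T x)%:E * exp_hit P y x <= (T%:R : R)%:E)%E.
Proof.
move=> Pst T_gt0 x_min; set p := hit_le P y T x.
have p_def : p = 1 - survival P y T x by rewrite /p hit_le_survival.
have svT_le z : survival P y T z <= survival P y T x by rewrite lerB.
have [svT_ge0 svT_le1] := (survival_ge0 y Pst T x, survival_le1 y Pst T x).
have [->|p_neq0] := eqVneq p 0; first by rewrite mul0e lee_fin ler0n.
have p_gt0 : 0 < p by rewrite lt_def p_neq0 p_def subr_ge0.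
have svT_lt1 : survival P y T x < 1 by rewrite -subr_gt0 -p_def.
rewrite /exp_hit (hit_exact_series_eq1 Pst svT_le) ?svT_ge0 ?svT_lt1 // eqxx.
have partial_le N : \sum_(0 <= n < N) n%:R * hit_exact P y n x <= T%:R / p.
  rewrite ler_pdivlMr // mulrC p_def.
  by have := sum_mean_bound Pst svT_le svT_ge0 svT_le1 N x T_gt0.
apply: le_trans (_ : (p%:E * (T%:R / p)%:E <= _)%E); last first.
  by rewrite -EFinM mulrC divfK.
apply: lee_wpmul2l; first by rewrite lee_fin ltW.
apply: lime_le.
  by apply: is_cvg_nneseries => n _ _; rewrite lee_fin mulr_ge0 ?ler0n ?hit_exact_ge0.
by apply: nearW => N; rewrite sumEFin lee_fin.
Qed.
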